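(* Let $I=\{x_1,\dots,x_n\}$ be a set of indices and $\prec$ a linear order on $I$. For any tensor $\phi$ with index set $I$, there exists a $\prec$-ordered normal TDD $\mathcal F$ such that $\Phi(\mathcal F)=\phi$.
   Context: Indices take values in $\{0,1\}$; a tensor over $I$ is a map $\{0,1\}^I\to\mathbb{C}$ (tensors over subsets of $I$ are regarded as tensors over $I$ not depending on the other indices). Each index $x$ is regarded as the tensor $x(c)=c$, and $\overline{x}(c):=1-c$; operations on tensors are pointwise. A TDD over $I$ is $\mathcal F=(V,E,index,value,low,high,w)$: a rooted directed acyclic graph with finite node set $V$ partitioned into non-terminal nodes $V_N$ and terminal nodes $V_T$, root $r_{\mathcal F}$; $index:V_N\to I$; $value:V_T\to\mathbb{C}$; $low,high:V_N\to V$; edges are the low-edges $(v,low(v))$ and high-edges $(v,high(v))$, $v\in V_N$, plus a unique source-less incoming edge $e_r$ of the root; $w$ gives each edge a complex weight and $w_{\mathcal F}:=w(e_r)$. Node tensors: $\Phi(v)=value(v)$ for terminal $v$; otherwise $\Phi(v)=w_0\overline{x_v}\Phi(low(v))+w_1x_v\Phi(high(v))$ with $x_v=index(v)$ and $w_0,w_1$ the low-/high-edge weights. The TDD represents $\Phi(\mathcal F):=w_{\mathcal F}\Phi(r_{\mathcal F})$. $\mathcal F$ is $\prec$-ordered if for every non-terminal node $v$, $index(v)\prec index(low(v))$ whenever $low(v)$ is non-terminal and $index(v)\prec index(high(v))$ whenever $high(v)$ is non-terminal. Normality (w.r.t. $\prec$): the pivot of a tensor $\phi$ is the lexicographically smallest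 (compare at the $\prec$-smallest differing index, $0<1$) $\vec a$ with $|\phi(\vec a)|=\max_{\vec b}|\phi(\vec b)|$; $\phi$ is normal if $\phi=0$ or $\phi$ equals $1$ at its pivot. A TDD is normal if $\Phi(v)$ is normal for every node $v$. *)

From HB Require Import structures.
From mathcomp Require Import all_boot all_order all_algebra.
Set Implicit Arguments. Unset Strict Implicit. Unset Printing Implicit Defensive.
Import Order.TTheory GRing.Theory Num.Theory.
Local Open Scope ring_scope.

(* Index values {0,1} are encoded as bool (false = 0, true = 1).
   A tensor over I is a map {0,1}^I -> C. *)
Definition assignment (I : finType) := {ffun I -> bool}.
Definition tensor (I : finType) (C : Type) := assignment I -> C.

Definition b2C (C : numClosedFieldType) (b : bool) : C := if b then 1 else 0.

Definition strict_linear_order (I : finType) (prec : rel I) : Prop :=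
  [/\ forall x, ~~ prec x x,
      forall x y z, prec x y -> prec y z -> prec x z
    & forall x y, x != y -> prec x y || prec y x].

(* Nodes form a finite type [node];
   [kind v = None] means v is terminal, [kind v = Some x] means v is
   non-terminal with index(v) = x.  [value] is only relevant on terminal
   nodes; [low], [high], [wlow], [whigh] only on non-terminal nodes
   (wlow v / whigh v are the weights of the low-/high-edge of v).
   [wroot] is the weight of the root's incoming edge e_r. *)
Record TDD (I : finType) (C : Type) := MkTDD {
  node : finType;
  root : node;
  kind : node -> option I;
  value : node -> C;
  low : node -> node;
  high : node -> node;
  wlow : node -> C;
  whigh : node -> C;
  wroot : C
}.

Definition tdd_edge (I : finType) C (F : TDD I C) : rel (node F) :=
  fun u v => (kind u != None) && ((v == low u) || (v == high u)).

Definition tdd_wf (I : finType) C (F : TDD I C) : Prop :=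
  (forall v, connect (@tdd_edge I C F) (root F) v) /\
  (forall u v, tdd_edge u v -> ~~ connect (@tdd_edge I C F) v u).

(* Node tensors, computed by recursion with fuel; in an acyclic graph with
   finitely many nodes, fuel #|node F| suffices, so [node_tensor] is the
   tensor Phi(v) of the paper. *)
Fixpoint phi_fuel (I : finType) (C : numClosedFieldType) (F : TDD I C) (k : nat)
    (v : node F) : tensor I C :=
  match k with
  | 0 => fun _ => value v
  | k'.+1 =>
    match kind v with
    | None => fun _ => value v
    | Some x => fun a =>
        wlow v * (1 - b2C C (a x)) * phi_fuel k' (low v) a
        + whigh v * b2C C (a x) * phi_fuel k' (high v) a
    end
  end.

Definition node_tensor (I : finType) (C : numClosedFieldType) (F : TDD I C) (v : node F)
  : tensor I C := phi_fuel #|node F| v.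

Definition tdd_tensor (I : finType) (C : numClosedFieldType) (F : TDD I C) : tensor I C :=
  fun a => wroot F * node_tensor (root F) a.

Definition tdd_ordered (I : finType) C (prec : rel I) (F : TDD I C) : Prop :=
  forall (v : node F) x, kind v = Some x ->
    (forall y, kind (low v) = Some y -> prec x y) /\
    (forall y, kind (high v) = Some y -> prec x y).

Definition lex_lt (I : finType) (prec : rel I) (a b : assignment I) : Prop :=
  exists x, [/\ a x = false, b x = true & forall y, prec y x -> a y = b y].

Definition is_pivot (I : finType) (C : numClosedFieldType) (prec : rel I)
    (phi : tensor I C) (a : assignment I) : Prop :=
  (forall b, `|phi b| <= `|phi a|) /\
  (forall b, `|phi b| = `|phi a| -> b <> a -> lex_lt prec a b).

Definition normal_tensor (I : finType) (C : numClosedFieldType) (prec : rel I)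
    (phi : tensor I C) : Prop :=
  (forall a, phi a = 0) \/ (exists a, is_pivot prec phi a /\ phi a = 1).

Definition tdd_normal (I : finType) (C : numClosedFieldType) (prec : rel I)
    (F : TDD I C) : Prop :=
  forall v : node F, normal_tensor prec (node_tensor v).

From mathcomp Require Import all_boot all_order all_algebra.
From mathcomp Require Import zify.
Import Order.TTheory GRing.Theory Num.Theory.

(* Take the full (unreduced) decision diagram of phi: a node of depth k fixes
   the values of the k prec-smallest indices, and its tensor is the
   corresponding cofactor of phi divided by its pivot entry (its value at the
   pivot, 0 when the cofactor vanishes). Such a tensor is normal by
   construction. Giving the edge into a node w the weight c_w / c_v, where
   c is the pivot entry and v the source (c_root for the root edge), the
   defining recursion of node tensors becomes the Shannon expansion of the
   cofactors, so the diagram represents c_root times the cofactor at the root,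
   which is phi itself. *)

Lemma exists_minimal {T : finType} {r : rel T} {S : {set T}} {x0 : T} :
  irreflexive r -> transitive r -> x0 \in S ->
  exists2 x, x \in S & forall y, y \in S -> ~~ r y x.
Proof.
move=> r_irr r_trans x0S.
pose below x := #|[set y in S | r y x]|.
case: (@arg_minnP _ x0 (mem S) below x0S) => x xS x_min.
exists x => // y yS; apply/negP => ryx.
have := x_min y yS; rewrite leqNgt => /negP; apply.
apply: proper_card; apply/properP; split.
  by apply/subsetP => z; rewrite !inE => /andP[-> rzy]; exact: r_trans rzy ryx.
by exists y; rewrite !inE ?yS ?ryx ?r_irr.
Qed.

Section Rank.
Local Set Implicit Arguments.
Local Unset Strict Implicit.
Variables (I : finType) (prec : rel I).
Hypothesis prec_order : strict_linear_order prec.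

Definition rank (x : I) : nat := #|[set y | prec y x]|.

Lemma rank_lt_card x : rank x < #|I|.
Proof.
case: prec_order => irr _ _.
rewrite -cardsT; apply: proper_card; apply/properP; split; first exact: subsetT.
by exists x; rewrite ?inE ?irr.
Qed.

Lemma ltn_rank x y : (rank x < rank y) = prec x y.
Proof.
case: prec_order => irr tr tot.
have rank_prec u v : prec u v -> rank u < rank v.
  move=> puv; apply: proper_card; apply/properP; split.
    by apply/subsetP => z; rewrite !inE => pzu; exact: tr pzu puv.
  by exists u; rewrite !inE ?irr.
apply/idP/idP => [lt_xy|]; last exact: rank_prec.
have [exy|nxy] := eqVneq x y; first by rewrite exy ltnn in lt_xy.
case/orP: (tot _ _ nxy) => // /rank_prec lt_yx.
by have := ltn_trans lt_xy lt_yx; rewrite ltnn.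
Qed.

Lemma rank_inj : injective rank.
Proof.
case: prec_order => _ _ tot x y exy; apply/eqP/negPn/negP => nxy.
by case/orP: (tot _ _ nxy); rewrite -ltn_rank exy ltnn.
Qed.

Lemma rank_onto k : k < #|I| -> exists x, rank x = k.
Proof.
move=> lt_k.
pose f x : 'I_#|I| := Ordinal (rank_lt_card x).
have f_inj : injective f by move=> x y /(congr1 val) /rank_inj.
have := inj_card_onto f_inj (eq_leq (card_ord _)) (Ordinal lt_k).
by case/codomP => x /(congr1 val) /= ->; exists x.
Qed.

End Rank.

Section Pivot.
Local Set Implicit Arguments.
Local Unset Strict Implicit.
Local Open Scope ring_scope.
Variables (I : finType) (prec : rel I) (C : numClosedFieldType).
Hypothesis prec_order : strict_linear_order prec.

Definition lex_ltb (a b : assignment I) : bool :=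
  [exists x, [&& ~~ a x, b x & [forall y, prec y x ==> (a y == b y)]]].

Lemma lex_ltbP a b : reflect (lex_lt prec a b) (lex_ltb a b).
Proof.
apply: (iffP existsP) => [[x /and3P[ax bx /forallP ab]]|[x [ax bx ab]]].
  exists x; split; [exact: negbTE | by [] | move=> y pyx].
  by apply/eqP; have := ab y; rewrite pyx.
by exists x; rewrite ax bx; apply/forallP => y; apply/implyP => /ab ->.
Qed.

Lemma lex_ltb_irr : irreflexive lex_ltb.
Proof. by move=> a; apply/existsP => -[x /and3P[/negP]]. Qed.

Lemma lex_ltb_trans : transitive lex_ltb.
Proof.
case: prec_order => _ tr tot.
move=> b a c /lex_ltbP[x [ax bx ab]] /lex_ltbP[y [by_ cy bc]]; apply/lex_ltbP.
have [exy|nxy] := eqVneq x y; first by move: bx; rewrite exy by_.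
case/orP: (tot _ _ nxy) => [pxy|pyx].
  exists x; split; [by [] | by rewrite -(bc _ pxy) |].
  by move=> z pzx; rewrite ab // bc //; exact: tr pzx pxy.
exists y; split; [by rewrite ab | by [] |].
by move=> z pzy; rewrite ab ?bc //; exact: tr pzy pyx.
Qed.

Lemma lex_ltb_total a b : a != b -> lex_ltb a b || lex_ltb b a.
Proof.
case: prec_order => irr tr _ nab.
have [x0 x0D] : exists x, x \in [set x | a x != b x].
  apply/existsP; apply: contraR nab => /existsPn ab.
  by apply/eqP/ffunP => x; apply/eqP; have := ab x; rewrite inE negbK.
have [x + x_min] := @exists_minimal _ prec _ _ (fun x => negbTE (irr x))
  (fun y x z => tr x y z) x0D.
have ab y : prec y x -> a y = b y.
  move=> pyx; apply/eqP/negPn/negP => nab_y.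
  by have := x_min y; rewrite inE nab_y pyx => /(_ isT).
rewrite inE; case ax: (a x); case bx: (b x) => // _.
  by apply/orP; right; apply/lex_ltbP; exists x; split => // y /ab ->.
by apply/orP; left; apply/lex_ltbP; exists x.
Qed.

Definition pivotb (psi : tensor I C) (a : assignment I) : bool :=
  [forall b, `|psi b| <= `|psi a|] &&
  [forall b, (`|psi b| == `|psi a|) ==> (b != a) ==> lex_ltb a b].

Lemma pivot_exists psi : exists a, pivotb psi a.
Proof.
pose a0 : assignment I := [ffun=> false].
have [m _ m_max] := @exists_minimal _ (fun y x => `|psi x| < `|psi y|) setT a0
   (fun x => ltxx _) (fun y x z h1 h2 => lt_trans h2 h1) (in_setT a0).
have mM : m \in [set b | `|psi b| == `|psi m|] by rewrite inE.
have [p + p_min] := exists_minimal lex_ltb_irr lex_ltb_trans mM.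
rewrite inE => /eqP pm.
exists p; apply/andP; split; apply/forallP => b.
  by rewrite pm real_leNgt ?normr_real //; exact: m_max (in_setT b).
apply/implyP => /eqP bp; apply/implyP => nbp.
have := lex_ltb_total nbp; have := p_min b; rewrite inE bp pm eqxx => /(_ isT).
by move/negbTE => ->.
Qed.

Definition pivot (psi : tensor I C) : assignment I := xchoose (pivot_exists psi).

Lemma pivotP psi : is_pivot prec psi (pivot psi).
Proof.
have /andP[/forallP psi_max /forallP psi_lex] := xchooseP (pivot_exists psi).
split => // b /eqP bp /eqP nbp; apply/lex_ltbP.
by have := psi_lex b; rewrite bp nbp.
Qed.

Definition pivot_value (psi : tensor I C) : C := psi (pivot psi).

Definition normalize (psi : tensor I C) : tensor I C :=
  fun a => psi a / pivot_value psi.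

Lemma normalizeK psi a : pivot_value psi * normalize psi a = psi a.
Proof.
have [c0|cn0] := eqVneq (pivot_value psi) 0; last by rewrite mulrC divfK.
have : `|psi a| <= `|pivot_value psi| by case: (pivotP psi).
rewrite c0 normr0 normr_le0 => /eqP psi_a0.
by rewrite /normalize psi_a0 c0 !mul0r.
Qed.

Lemma normal_normalize psi chi : chi =1 normalize psi -> normal_tensor prec chi.
Proof.
rewrite /normalize => chiE.
have [c0|cn0] := eqVneq (pivot_value psi) 0.
  by left => a; rewrite chiE c0 invr0 mulr0.
right; exists (pivot psi); split; last by rewrite chiE divff.
have [psi_max psi_lex] := pivotP psi.
have c_gt0 : 0 < `|pivot_value psi|^-1 by rewrite invr_gt0 normr_gt0.
split=> [b|b]; rewrite !chiE !normrM !normfV.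
  by rewrite ler_pM2r //; exact: psi_max.
by move/(mulIf (lt0r_neq0 c_gt0)); exact: psi_lex.
Qed.

End Pivot.

Section DecisionDiagram.
Local Set Implicit Arguments.
Local Unset Strict Implicit.
Local Open Scope ring_scope.
Variables (I : finType) (prec : rel I) (C : numClosedFieldType).
Hypothesis prec_order : strict_linear_order prec.
Variable phi : tensor I C.

Local Notation n := #|I|.
Local Notation rank := (rank prec).

(* A node (k, f) fixes the indices of rank < k to the values of f; f is
   required to vanish on the other indices so that every node is reachable. *)
Definition is_prefix (p : 'I_n.+1 * assignment I) : bool :=
  [forall y, (p.1 <= rank y)%N ==> ~~ p.2 y].

Definition dnode : finType := {p : 'I_n.+1 * assignment I | is_prefix p}.

Definition depth (v : dnode) : nat := (val v).1.
Definition fixed (v : dnode) : assignment I := (val v).2.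

Lemma is_prefix_mask (k : 'I_n.+1) (f : assignment I) :
  is_prefix (k, [ffun y => (rank y < k)%N && f y]).
Proof. by apply/forallP => y /=; apply/implyP => le_ky; rewrite ffunE ltnNge le_ky. Qed.

Definition mk_node (k : 'I_n.+1) (f : assignment I) : dnode :=
  exist is_prefix _ (is_prefix_mask k f).

Definition child (v : dnode) (b : bool) : dnode :=
  mk_node (inord (depth v).+1)
    [ffun y => if rank y == depth v then b else fixed v y].

Definition root_node : dnode := mk_node ord0 [ffun=> false].

Definition branch_index (v : dnode) : option I := [pick x | rank x == depth v].

Definition extend (v : dnode) (a : assignment I) : assignment I :=
  [ffun y => if (rank y < depth v)%N then fixed v y else a y].

Definition cofactor (v : dnode) : tensor I C := fun a => phi (extend v a).

Definition scale (v : dnode) : C := pivot_value prec_order (cofactor v).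

Definition dtensor (v : dnode) : tensor I C := normalize prec_order (cofactor v).

Definition decision_tdd : TDD I C :=
  @MkTDD I C dnode root_node branch_index (fun v => dtensor v (fixed v))
    (child^~ false) (child^~ true)
    (fun v => scale (child v false) / scale v)
    (fun v => scale (child v true) / scale v)
    (scale root_node).

Local Notation edge := (@tdd_edge I C decision_tdd).

Lemma depth_le v : (depth v <= n)%N.
Proof. by rewrite -ltnS; exact: ltn_ord. Qed.

Lemma fixed_ge_depth v y : (depth v <= rank y)%N -> fixed v y = false.
Proof. by move=> le_vy; have /forallP/(_ y) := valP v; rewrite le_vy => /negbTE. Qed.

Lemma dnode_eq u v : depth u = depth v -> fixed u =1 fixed v -> u = v.
Proof.
case: u v => [[k f] Hu] [[k' f'] Hv]; rewrite /depth /fixed /= => ekk eff.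
by apply/val_inj; congr pair; [exact: val_inj | exact/ffunP].
Qed.

Lemma fixed_mk_node k f y : fixed (mk_node k f) y = (rank y < k)%N && f y.
Proof. exact: ffunE. Qed.

Definition parent (v : dnode) : dnode := mk_node (inord (depth v).-1) (fixed v).

Lemma depth_parent v : depth (parent v) = (depth v).-1.
Proof. by rewrite /depth /= inordK // (leq_ltn_trans (leq_pred _) (ltn_ord _)). Qed.

Lemma depth_child v b : (depth v < n)%N -> depth (child v b) = (depth v).+1.
Proof. by move=> lt_vn; rewrite /depth /= inordK. Qed.

Lemma fixed_child v b y : (depth v < n)%N ->
  fixed (child v b) y = if rank y == depth v then b else fixed v y.
Proof.
move=> lt_vn; rewrite /fixed /= !ffunE inordK // ltnS leq_eqVlt.
have [-> //|ne_yv] := eqVneq (rank y) (depth v); rewrite /=.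
by case: ltnP => // le_vy; rewrite fixed_ge_depth.
Qed.

Lemma child_parent v x : rank x = (depth v).-1 -> (0 < depth v)%N ->
  child (parent v) (fixed v x) = v.
Proof.
move=> ex pos_v; have dp := depth_parent v.
have lt_pn : (depth (parent v) < n)%N.
  by rewrite dp prednK //; exact: depth_le.
apply: dnode_eq => [|y]; first by rewrite depth_child // dp prednK.
rewrite fixed_child // dp fixed_mk_node inordK ?ltnS ?(leq_trans (leq_pred _)) ?depth_le //.
have [ey|ne_y] := eqVneq (rank y) (depth v).-1.
  by rewrite (rank_inj prec_order (etrans ey (esym ex))).
case: ltnP => //= le_y; rewrite fixed_ge_depth //.
by rewrite -(prednK pos_v) ltn_neqAle eq_sym ne_y.
Qed.

Lemma branch_index_rank v x : branch_index v = Some x -> rank x = depth v.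
Proof. by rewrite /branch_index; case: pickP => // y /eqP ey [<-]. Qed.

Lemma branch_index_lt v : (depth v < n)%N -> exists x, branch_index v = Some x.
Proof.
case/(rank_onto prec_order) => x ex; rewrite /branch_index.
by case: pickP => [y _|/(_ x)]; [exists y | rewrite ex eqxx].
Qed.

Lemma branch_index_terminal v : depth v = n -> branch_index v = None.
Proof.
move=> dv; rewrite /branch_index; case: pickP => // x /eqP ex.
by have := rank_lt_card prec_order x; rewrite ex dv ltnn.
Qed.

Lemma extend_child v x (a : assignment I) : rank x = depth v -> (depth v < n)%N ->
  extend (child v (a x)) a = extend v a.
Proof.
move=> ex lt_vn; apply/ffunP => y.
rewrite ffunE [RHS]ffunE depth_child // fixed_child //.
rewrite ltnS leq_eqVlt; have [ey|ne_yv] := eqVneq (rank y) (depth v).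
  by rewrite ey ltnn (rank_inj prec_order (etrans ey (esym ex))).
by rewrite /=; case: ltnP.
Qed.

Lemma dtensor_terminal v a b : depth v = n -> dtensor v a = dtensor v b.
Proof.
move=> dv; rewrite /dtensor /normalize /cofactor.
by congr (phi _ / _); apply/ffunP => y; rewrite !ffunE dv rank_lt_card.
Qed.

(* Shannon expansion; when scale v = 0 both sides vanish. *)
Lemma dtensor_child v x (a : assignment I) : rank x = depth v -> (depth v < n)%N ->
  dtensor v a = scale (child v (a x)) / scale v * dtensor (child v (a x)) a.
Proof.
by move=> ex lt_vn; rewrite mulrAC normalizeK /cofactor extend_child.
Qed.

Lemma phi_fuel_dtensor m v a :
  (n - depth v <= m)%N -> phi_fuel (F := decision_tdd) m v a = dtensor v a.
Proof.
elim: m v => [|m IHm] v le_fuel.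
  by apply: dtensor_terminal; have := depth_le v; lia.
case: (ltngtP (depth v) n) (depth_le v) => [lt_vn|//|dv] _; last first.
  by rewrite /= branch_index_terminal //; exact: dtensor_terminal.
have [x bx] := branch_index_lt lt_vn; have ex := branch_index_rank bx.
rewrite /= bx !IHm ?depth_child; try lia.
by rewrite (dtensor_child a ex lt_vn); case: (a x); rewrite /b2C ?subrr ?subr0;
  rewrite !mulr0 !mulr1 ?mul0r ?add0r ?addr0.
Qed.

Lemma node_tensor_dtensor v a : node_tensor (F := decision_tdd) v a = dtensor v a.
Proof.
apply: phi_fuel_dtensor.
have mk_inj : injective (fun k : 'I_n.+1 => mk_node k [ffun=> false]).
  by move=> i j /(congr1 depth) /val_inj.
have := leq_card _ mk_inj; rewrite card_ord => lt_n_card.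
exact: leq_trans (leq_subr _ _) (ltnW lt_n_card).
Qed.

Lemma edge_depth u v : edge u v -> depth v = (depth u).+1.
Proof.
rewrite /tdd_edge /=; case bu: (branch_index u) => [x|//] /=.
have lt_un : (depth u < n)%N by rewrite -(branch_index_rank bu) rank_lt_card.
by case/orP=> /eqP ->; rewrite depth_child.
Qed.

Lemma connect_depth u v : connect edge u v -> (depth u <= depth v)%N.
Proof.
case/connectP => p + ->; elim: p u => //= w p IHp u /andP[e_uw p_path].
by apply: leq_trans (IHp _ p_path); rewrite (edge_depth e_uw).
Qed.

Lemma connect_root v : connect edge root_node v.
Proof.
move: {2}(depth v) (erefl (depth v)) => k; elim: k v => [|k IHk] v dv.
  rewrite (@dnode_eq v root_node) ?connect0 // => y.
  by rewrite fixed_mk_node fixed_ge_depth ?dv.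
have pos_v : (0 < depth v)%N by rewrite dv.
have dp : depth (parent v) = k by rewrite depth_parent dv.
have [x bx] : exists x, branch_index (parent v) = Some x.
  by apply: branch_index_lt; rewrite dp -dv depth_le.
have ex := branch_index_rank bx.
have vE : child (parent v) (fixed v x) = v.
  by apply: child_parent; rewrite ?ex ?depth_parent.
rewrite -vE.
apply: connect_trans (IHk _ dp) (connect1 _).
by rewrite /tdd_edge /= bx; case: (fixed v x); rewrite eqxx ?orbT.
Qed.

Lemma decision_tdd_spec :
  [/\ tdd_wf decision_tdd, tdd_ordered prec decision_tdd,
      tdd_normal prec decision_tdd
    & forall a, tdd_tensor decision_tdd a = phi a].
Proof.
split.
- split=> [v|u v e_uv]; first exact: connect_root.
  by apply/negP => /connect_depth; rewrite (edge_depth e_uv) ltnn.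
- move=> v x /= bx; have ex := branch_index_rank bx.
  have lt_vn : (depth v < n)%N by rewrite -ex rank_lt_card.
  by split=> y /branch_index_rank ey; rewrite -(ltn_rank prec_order) ex ey
    depth_child.
- by move=> v; apply: normal_normalize => a; exact: node_tensor_dtensor.
- move=> a; rewrite /tdd_tensor node_tensor_dtensor normalizeK /cofactor.
  by congr phi; apply/ffunP => y; rewrite ffunE.
Qed.

End DecisionDiagram.

Theorem theorem2 (I : finType) (prec : rel I) (C : numClosedFieldType) :
  strict_linear_order prec ->
  forall phi : tensor I C,
  exists F : TDD I C,
    [/\ tdd_wf F, tdd_ordered prec F, tdd_normal prec F
      & forall a, tdd_tensor F a = phi a].
Proof.
move=> prec_order phi.
by exists (decision_tdd prec_order phi); exact: decision_tdd_spec.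
Qed.
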